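(* Let $B$ be a $p\times q$ matrix, $G$ a $q\times q$ symmetric matrix and $G'$ a $p\times p$ symmetric matrix. Let $$A=\begin{bmatrix} G' & B & B\\ B^T & 0 & G\\ B^T & G & 0\end{bmatrix}\quad ((p+2q)\times(p+2q)),\qquad C=\begin{bmatrix} G & B^T & B^T\\ B & 0 & G'\\ B & G' & 0\end{bmatrix}\quad ((2p+q)\times(2p+q)).$$ Then $A\oplus\begin{bmatrix}0 & G'\\ G' & 0\end{bmatrix}\oplus G$ and $C\oplus\begin{bmatrix}0 & G\\ G & 0\end{bmatrix}\oplus G'$ are cospectral.
   Context: For matrices $X,Y$, $X\oplus Y=\begin{bmatrix} X&0\\0&Y\end{bmatrix}$, and $0$ denotes a zero matrix of appropriate size. Two square matrices are cospectral if they have the same eigenvalues with the same multiplicities. *)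

From HB Require Import structures.
From mathcomp Require Import all_boot all_order all_algebra.
From mathcomp Require Import reals.
Set Implicit Arguments. Unset Strict Implicit. Unset Printing Implicit Defensive.
Import GRing.Theory Num.Theory.
Local Open Scope ring_scope.

Definition dsum (R : pzRingType) (m n : nat) (X : 'M[R]_m) (Y : 'M[R]_n)
  : 'M[R]_(m + n) := block_mx X 0 0 Y.

(* Used for real symmetric matrices, whose eigenvalues are all real. *)
Definition cospectral (R : realType) (n m : nat) (X : 'M[R]_n) (Y : 'M[R]_m) : Prop :=
  n = m /\ forall x : R, mup x (char_poly X) = mup x (char_poly Y).

(* Conjugating by the block matrix P = [1 1; 1 -1] (with P P = 2) splits
   [[0, H]; [H, 0]] into H (+) -H and splits the two copies of B in A (resp. B^T
   in C) into a single block 2B (resp. 2B^T).  Hence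
     char A = char [[G', 2B]; [B^T, G]] * char (-G),
     char C = char [[G, 2B^T]; [B, G']] * char (-G'),
   and the two 2x2 block matrices have the same characteristic polynomial
   (swap the blocks, then move the factor 2 to the other corner by conjugating
   with 1 (+) 2).  Both direct sums therefore have characteristic polynomial
     char [[G', 2B]; [B^T, G]] * char G * char (-G) * char G' * char (-G'). *)
From HB Require Import structures.
From mathcomp Require Import all_boot all_order all_algebra.
From mathcomp Require Import reals.
From mathcomp Require Import ring zify.
Set Implicit Arguments. Unset Strict Implicit. Unset Printing Implicit Defensive.
Import GRing.Theory Num.Theory.
Local Open Scope ring_scope.

Lemma char_poly_block_diag (R : comNzRingType) m n (X : 'M[R]_m) (Y : 'M[R]_n) :
  char_poly (block_mx X 0 0 Y) = char_poly X * char_poly Y.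
Proof. by rewrite /char_poly char_block_diag_mx det_ublock. Qed.

Lemma char_poly_castmx (R : comNzRingType) m n (e1 e2 : m = n) (X : 'M[R]_m) :
  char_poly (castmx (e1, e2) X) = char_poly X.
Proof. by case: n / e1 e2 => e2; rewrite castmx_id. Qed.

Section Intertwining.
Variable R : idomainType.

Ltac mx_simpl :=
  rewrite ?(mulmx1, mul1mx, mul0mx, mulmx0, add0r, addr0, mulmxN, mulNmx,
            opprK, subrr, oppr0).

(* [S] need not be invertible, only a divisor of a nonzero scalar matrix, so
   that [P = [1 1; 1 -1]] can be used without inverting 2. *)
Lemma char_poly_intertwined m n (e : m = n) (X : 'M[R]_m) (Y : 'M[R]_n)
    (S : 'M[R]_(m, n)) (T : 'M[R]_(n, m)) (c : R) :
  c != 0 -> S *m T = c%:M -> X *m S = S *m Y -> char_poly X = char_poly Y.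
Proof.
case: n / e Y S T => Y S T c_neq0 ST_c XS_SY.
have detS_neq0 : \det S != 0.
  apply/eqP => detS0; move/eqP: c_neq0; apply.
  have := f_equal determinant ST_c.
  rewrite det_mulmx detS0 mul0r det_scalar => /esym/eqP.
  by rewrite expf_eq0 => /andP[_ /eqP].
pose SX := map_mx (@polyC R) S.
have char_mx_intertwined : char_poly_mx X *m SX = SX *m char_poly_mx Y.
  rewrite /char_poly_mx mulmxBl mulmxBr -map_mxM XS_SY map_mxM.
  by rewrite mul_scalar_mx mul_mx_scalar.
have : char_poly X * \det SX = \det SX * char_poly Y.
  by rewrite /char_poly -!det_mulmx char_mx_intertwined.
by rewrite det_map_mx mulrC => /mulfI; apply; rewrite polyC_eq0.
Qed.

Lemma char_poly_block_swap m n (X : 'M[R]_m) Y Z (W : 'M[R]_n) :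
  char_poly (block_mx X Y Z W) = char_poly (block_mx W Z Y X).
Proof.
pose J := block_mx 0 1%:M 1%:M 0 : 'M[R]_(m + n, n + m).
pose J' := block_mx 0 1%:M 1%:M 0 : 'M[R]_(n + m, m + n).
apply: (@char_poly_intertwined _ _ (addnC m n) _ _ J J' 1).
- exact: oner_neq0.
- by rewrite mulmx_block; mx_simpl; rewrite -scalar_mx_block.
- by rewrite !mulmx_block; mx_simpl.
Qed.

Let scalar_mx2 n : (1%:M : 'M[R]_n) + 1%:M = 2%:M.
Proof. by rewrite -raddfD. Qed.

Hypothesis two_neq0 : 2 != 0 :> R.

Lemma char_poly_antidiag n (H : 'M[R]_n) :
  char_poly (block_mx 0 H H 0) = char_poly H * char_poly (- H).
Proof.
rewrite -char_poly_block_diag.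
pose P := block_mx (1%:M : 'M[R]_n) 1%:M 1%:M (- 1%:M).
apply: (@char_poly_intertwined _ _ (erefl _) _ _ P P 2) => //.
- by rewrite /P mulmx_block; mx_simpl; rewrite scalar_mx2 -scalar_mx_block.
- by rewrite /P !mulmx_block; mx_simpl.
Qed.

Lemma char_poly_block_mulr2n m n (X : 'M[R]_m) (Y : 'M[R]_(m, n)) Z
    (W : 'M[R]_n) :
  char_poly (block_mx X Y (Z *+ 2) W) = char_poly (block_mx X (Y *+ 2) Z W).
Proof.
pose D1 := block_mx 1%:M 0 0 2%:M : 'M[R]_(m + n).
pose D2 := block_mx 2%:M 0 0 1%:M : 'M[R]_(m + n).
apply: (@char_poly_intertwined _ _ (erefl _) _ _ D1 D2 2) => //.
- by rewrite mulmx_block; mx_simpl; rewrite -scalar_mx_block.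
- rewrite !mulmx_block; mx_simpl.
  by rewrite !mul_mx_scalar !mul_scalar_mx !scaler_nat.
Qed.

Lemma char_poly_duplicated_block m n (X : 'M[R]_m) (Y : 'M[R]_(m, n))
    (Z : 'M[R]_(n, m)) (H : 'M[R]_n) :
  char_poly (block_mx X (row_mx Y Y) (col_mx Z Z) (block_mx 0 H H 0))
  = char_poly (block_mx X (Y *+ 2) Z H) * char_poly (- H).
Proof.
pose P := block_mx (1%:M : 'M[R]_n) 1%:M 1%:M (- 1%:M).
have -> : char_poly (block_mx X (row_mx Y Y) (col_mx Z Z) (block_mx 0 H H 0))
  = char_poly (block_mx X (row_mx (Y *+ 2) 0) (col_mx Z 0)
                          (block_mx H 0 0 (- H))).
  apply: (@char_poly_intertwined _ _ (erefl _) _ _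
            (block_mx 1%:M 0 0 P) (block_mx 2%:M 0 0 P) 2) => //.
  - rewrite mulmx_block; mx_simpl; rewrite /P mulmx_block; mx_simpl.
    by rewrite !scalar_mx2 -!scalar_mx_block.
  - rewrite !mulmx_block; mx_simpl; rewrite /P mul_row_block mul_block_col.
    by mx_simpl; rewrite mulr2n.
rewrite block_mxA char_poly_castmx row_mx0 col_mx0.
exact: char_poly_block_diag.
Qed.

End Intertwining.

Theorem theorem3p8 (R : realType) (p q : nat)
  (B : 'M[R]_(p, q)) (G : 'M[R]_q) (G' : 'M[R]_p)
  (HG : G^T = G) (HG' : G'^T = G') :
  let A : 'M[R]_(p + (q + q)) :=
    block_mx G' (row_mx B B) (col_mx B^T B^T) (block_mx 0 G G 0) in
  let C : 'M[R]_(q + (p + p)) :=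
    block_mx G (row_mx B^T B^T) (col_mx B B) (block_mx 0 G' G' 0) in
  cospectral (dsum (dsum A (block_mx 0 G' G' 0)) G)
             (dsum (dsum C (block_mx 0 G G 0)) G').
Proof.
move=> A C; split; first lia.
have two_neq0 : 2 != 0 :> R by rewrite pnatr_eq0.
move=> x; congr mup.
rewrite /dsum /A /C !char_poly_block_diag !char_poly_duplicated_block //.
rewrite !char_poly_antidiag // (char_poly_block_swap G) char_poly_block_mulr2n //.
ring.
Qed.
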